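(* Let $f$ be a $2\pi$-periodic continuous function with modulus of continuity $\omega(t)$, and let $A=(a_{n,k})$ be a lower triangular infinite matrix of real numbers ($a_{n,k}=0$ for $k>n$) with $a_{n,k}\ge 0$ and $\sum_{k=0}^n a_{n,k}=1$ for all $n$. Let $\beta\ge0$ and suppose \[ \sum_{k=m}^{\infty}(k+1)^{\beta}\left|\frac{a_{n,k}}{(k+1)^{\beta}}-\frac{a_{n,k+1}}{(k+2)^{\beta}}\right|=\mathcal{O}(a_{n,m}) \] for all $m=0,1,\dots,n$ and $n=0,1,\dots$. Then \[ \|T_{n,A}(f)-f\|=\mathcal{O}\left(\omega\left(\frac{\pi}{n+1}\right)+\sum_{v=1}^{n}v^{-1}\omega\left(\frac{\pi}{v}\right)\sum_{j=0}^{v}a_{n,j}\right). \]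
   Context: $S_k(f;x)$ is the $k$-th partial sum of the Fourier series of $f$ at $x$, and $T_{n,A}(f;x):=\sum_{k=0}^n a_{n,k}S_k(f;x)$. $\|\cdot\|$ is the sup-norm. $\omega(\delta)=\sup_{|h|\le\delta}\sup_x|f(x+h)-f(x)|$. The notation $u=\mathcal{O}(v)$ means $u\le Cv$ for a positive constant $C$ (independent of $n$). *)

From Stdlib Require Import Reals List.
From Coquelicot Require Import Coquelicot.
Open Scope R_scope.

(* sum_{k=m}^{n} g k ; equals 0 when n < m *)
Definition sumR (m n : nat) (g : nat -> R) : R :=
  fold_right Rplus 0 (map g (seq m (S n - m))).

Definition fourier_a (f : R -> R) (k : nat) : R :=
  / PI * RInt (fun t => f t * cos (INR k * t)) (- PI) PI.
Definition fourier_b (f : R -> R) (k : nat) : R :=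
  / PI * RInt (fun t => f t * sin (INR k * t)) (- PI) PI.

Definition S_partial (f : R -> R) (k : nat) (x : R) : R :=
  fourier_a f 0 / 2 +
  sumR 1 k (fun j => fourier_a f j * cos (INR j * x) + fourier_b f j * sin (INR j * x)).

Definition T_nA (a : nat -> nat -> R) (f : R -> R) (n : nat) (x : R) : R :=
  sumR 0 n (fun k => a n k * S_partial f k x).

Definition modulus (f : R -> R) (d : R) : R :=
  real (Lub_Rbar (fun y => exists h x, Rabs h <= d /\ y = Rabs (f (x + h) - f x))).

(* Write D_k for the Dirichlet kernel and K_n := sum_k a_{n,k} D_k.  Since K_n is even,
   pi (T_{n,A}(f;x) - f(x)) = int_0^pi (f(x+t) + f(x-t) - 2 f(x)) K_n(t) dt,
   and the integrand is at most 2 omega(t) |K_n(t)|.  On [0, pi/(n+1)] we use |K_n| <= n + 1.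
   For pi/(v+1) < t <= pi we have 2 sin(t/2) K_n(t) = sum_k a_{n,k} sin((k+1/2)t).  Split this
   sum at any m <= v: the head is at most sum_{j<=v} a_{n,j}; summing the tail by parts against
   the weights (k+1)^beta, whose weighted sine sums are O((k+1)^beta / sin(t/2)), the hypothesis
   on A bounds it by K a_{n,m} / sin(t/2).  Averaging over m = 0..v and using
   sin(t/2) >= 1/(2(v+1)) gives |K_n(t)| <= (1+2K)(v+1) sum_{j<=v} a_{n,j}, and integrating over
   the intervals [pi/(v+1), pi/v] yields the bound. *)

From Stdlib Require Import Reals List Lra Lia.
From Coquelicot Require Import Coquelicot.
Open Scope R_scope.

Lemma sumR_empty m n g : (n < m)%nat -> sumR m n g = 0.
Proof. intros H; unfold sumR. replace (S n - m)%nat with 0%nat by lia. reflexivity. Qed.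

Lemma sumR_single m g : sumR m m g = g m.
Proof. unfold sumR. replace (S m - m)%nat with 1%nat by lia. simpl. ring. Qed.

Lemma sumR_Sr m n g : (m <= S n)%nat -> sumR m (S n) g = sumR m n g + g (S n).
Proof.
  intros H; unfold sumR.
  replace (S (S n) - m)%nat with (S (S n - m)) by lia.
  rewrite seq_S, map_app, fold_right_app; cbn [fold_right map].
  replace (m + (S n - m))%nat with (S n) by lia.
  induction (map g (seq m (S n - m))) as [|y l IH]; simpl; [ring|].
  rewrite IH; ring.
Qed.

Lemma sumR_le m n f g :
  (forall k, (m <= k <= n)%nat -> f k <= g k) -> sumR m n f <= sumR m n g.
Proof.
  intros H; unfold sumR.
  assert (Hl : forall k, In k (seq m (S n - m)) -> f k <= g k)
    by (intros k Hk; apply in_seq in Hk; apply H; lia).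
  induction (seq m (S n - m)) as [|k l IH]; simpl in *; [lra|].
  apply Rplus_le_compat; auto.
Qed.

Lemma sumR_ext m n f g :
  (forall k, (m <= k <= n)%nat -> f k = g k) -> sumR m n f = sumR m n g.
Proof.
  intros H; apply Rle_antisym; apply sumR_le; intros k Hk; rewrite H by exact Hk; lra.
Qed.

Lemma sumR_plus m n f g : sumR m n (fun k => f k + g k) = sumR m n f + sumR m n g.
Proof. unfold sumR; induction (seq m (S n - m)); simpl; [|rewrite IHl]; ring. Qed.

Lemma sumR_scal m n c g : sumR m n (fun k => c * g k) = c * sumR m n g.
Proof. unfold sumR; induction (seq m (S n - m)); simpl; [|rewrite IHl]; ring. Qed.

Lemma sumR_const m n c : sumR m n (fun _ => c) = INR (S n - m) * c.
Proof.
  unfold sumR; generalize (S n - m)%nat as d; intros d; revert m.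
  induction d as [|d IH]; intros p; cbn [seq map fold_right]; [simpl; ring|].
  rewrite IH, S_INR; ring.
Qed.

Lemma Rabs_sumR_le m n g : Rabs (sumR m n g) <= sumR m n (fun k => Rabs (g k)).
Proof.
  unfold sumR; induction (seq m (S n - m)); simpl; [rewrite Rabs_R0; lra|].
  eapply Rle_trans; [apply Rabs_triang | lra].
Qed.

Lemma sumR_nonneg m n g : (forall k, (m <= k <= n)%nat -> 0 <= g k) -> 0 <= sumR m n g.
Proof.
  intros H. replace 0 with (sumR m n (fun _ => 0)) by (rewrite sumR_const; ring).
  apply sumR_le; exact H.
Qed.

Lemma sumR_split m p n g : (m <= p <= n)%nat -> sumR m n g = sumR m p g + sumR (S p) n g.
Proof.
  intros [Hmp Hpn]; induction Hpn as [|n Hpn IH].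
  - rewrite (sumR_empty (S p)) by lia; ring.
  - rewrite !sumR_Sr, IH by lia; ring.
Qed.

Lemma sumR_le_upper m p q g : (forall k, 0 <= g k) -> (p <= q)%nat -> sumR m p g <= sumR m q g.
Proof.
  intros Hg Hpq; induction Hpq as [|q Hpq IH]; [lra|].
  destruct (Nat.le_gt_cases m (S q)).
  - rewrite sumR_Sr by lia; specialize (Hg (S q)); lra.
  - rewrite !sumR_empty in * by lia; lra.
Qed.

Lemma sumR_shift m d g : sumR 0 d (fun i => g (m + i)%nat) = sumR m (m + d) g.
Proof.
  induction d as [|d IH].
  - rewrite Nat.add_0_r, !sumR_single, Nat.add_0_r; reflexivity.
  - rewrite Nat.add_succ_r, !sumR_Sr, IH, Nat.add_succ_r by lia; reflexivity.
Qed.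

Lemma sumR_by_parts (b c : nat -> R) m q : (m <= q)%nat ->
  sumR m q (fun k => b k * c k) =
  sumR m q (fun k => (b k - b (S k)) * sumR m k c) + b (S q) * sumR m q c.
Proof.
  intros Hmq; induction Hmq as [|q Hmq IH].
  - rewrite !sumR_single; ring.
  - rewrite !(sumR_Sr m q), IH by lia; ring.
Qed.

Lemma Rabs_sumR_weighted_diff_le (w c : nat -> R) m q : (m <= q)%nat ->
  (forall k, 0 <= w k) -> (forall k, w k <= w (S k)) -> (forall k, Rabs (c k) <= 1) ->
  Rabs (sumR m q (fun k => w k * (c k - c (S k)))) <= 2 * w q.
Proof.
  intros Hmq Hw Hmono Hc.
  (* The partial sum plus [w p * c (S p)] equals
     [w m * c m + sum_(m < k <= p) (w k - w (k-1)) * c k]. *)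
  assert (Hpartial : forall p, (m <= p)%nat ->
    Rabs (sumR m p (fun k => w k * (c k - c (S k))) + w p * c (S p)) <= w p).
  { intros p Hmp; induction Hmp as [|p Hmp IH].
    - rewrite sumR_single.
      replace (w m * (c m - c (S m)) + w m * c (S m)) with (w m * c m) by ring.
      rewrite Rabs_mult, (Rabs_right (w m)) by (apply Rle_ge, Hw).
      specialize (Hc m); specialize (Hw m); nra.
    - rewrite sumR_Sr by lia.
      set (s := sumR m p _) in *.
      replace (s + w (S p) * (c (S p) - c (S (S p))) + w (S p) * c (S (S p)))
        with ((s + w p * c (S p)) + (w (S p) - w p) * c (S p)) by ring.
      eapply Rle_trans; [apply Rabs_triang|].
      rewrite Rabs_mult, (Rabs_right (w (S p) - w p)) by (specialize (Hmono p); lra).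
      specialize (Hc (S p)); specialize (Hmono p); nra. }
  specialize (Hpartial q Hmq).
  set (s := sumR m q _) in *.
  replace s with ((s + w q * c (S q)) - w q * c (S q)) by ring.
  eapply Rle_trans; [apply Rabs_triang|].
  rewrite Rabs_Ropp, Rabs_mult, (Rabs_right (w q)) by (apply Rle_ge, Hw).
  specialize (Hc (S q)); specialize (Hw q); nra.
Qed.

Lemma sum_n_sumR (u : nat -> R) p : sum_n u p = sumR 0 p u.
Proof.
  induction p as [|p IH]; [rewrite sum_O, sumR_single; reflexivity|].
  rewrite sum_Sn, sumR_Sr, IH by lia; reflexivity.
Qed.

Lemma Series_eq_sumR (u : nat -> R) N : (forall i, (N < i)%nat -> u i = 0) -> Series u = sumR 0 N u.
Proof.
  intros Hu; apply is_series_unique.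
  change (is_lim_seq (sum_n u) (sumR 0 N u)).
  apply (is_lim_seq_ext_loc (fun _ => sumR 0 N u)); [|apply is_lim_seq_const].
  exists N; intros p Hp; rewrite sum_n_sumR.
  induction Hp as [|p Hp IH]; [reflexivity|].
  rewrite sumR_Sr, (Hu (S p)), <- IH by lia; ring.
Qed.

Lemma continuous_Rplus (f g : R -> R) x :
  continuous f x -> continuous g x -> continuous (fun t => f t + g t) x.
Proof. apply (continuous_plus f g). Qed.

Lemma continuous_Rminus (f g : R -> R) x :
  continuous f x -> continuous g x -> continuous (fun t => f t - g t) x.
Proof. apply (continuous_minus f g). Qed.

Lemma continuous_Rmult (f g : R -> R) x :
  continuous f x -> continuous g x -> continuous (fun t => f t * g t) x.
Proof. apply (continuous_mult f g). Qed.

Lemma continuous_sumR (G : nat -> R -> R) m n x :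
  (forall k, continuous (G k) x) -> continuous (fun t => sumR m n (fun k => G k t)) x.
Proof.
  intros HG; unfold sumR; induction (seq m (S n - m)); simpl.
  - apply continuous_const.
  - apply continuous_Rplus; auto.
Qed.

Lemma continuous_comp_derivable (u g : R -> R) x :
  ex_derive u x -> (forall y, continuous g y) -> continuous (fun t => g (u t)) x.
Proof.
  intros Hu Hg; apply (continuous_comp u g); [|apply Hg].
  apply (@ex_derive_continuous R_AbsRing R_NormedModule), Hu.
Qed.

Lemma continuous_cos_mul c x : continuous (fun t => cos (c * t)) x.
Proof. apply (@ex_derive_continuous R_AbsRing R_NormedModule); auto_derive; auto. Qed.

Lemma continuous_sin_mul c x : continuous (fun t => sin (c * t)) x.
Proof. apply (@ex_derive_continuous R_AbsRing R_NormedModule); auto_derive; auto. Qed.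

Lemma ex_RInt_R_continuous (g : R -> R) a b : (forall y, continuous g y) -> ex_RInt g a b.
Proof. intros Hg; apply (@ex_RInt_continuous R_CompleteNormedModule); auto. Qed.

Lemma is_RInt_Rplus (f g : R -> R) a b (If Ig : R) :
  is_RInt f a b If -> is_RInt g a b Ig -> is_RInt (fun t => f t + g t) a b (If + Ig).
Proof. apply (is_RInt_plus f g). Qed.

Lemma is_RInt_Rminus (f g : R -> R) a b (If Ig : R) :
  is_RInt f a b If -> is_RInt g a b Ig -> is_RInt (fun t => f t - g t) a b (If - Ig).
Proof. apply (is_RInt_minus f g). Qed.

Lemma is_RInt_Rscal (f : R -> R) a b c (If : R) :
  is_RInt f a b If -> is_RInt (fun t => c * f t) a b (c * If).
Proof. apply (is_RInt_scal f). Qed.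

Lemma is_RInt_sumR (G : nat -> R -> R) (I : nat -> R) a b m n :
  (forall k, (m <= k <= n)%nat -> is_RInt (G k) a b (I k)) ->
  is_RInt (fun t => sumR m n (fun k => G k t)) a b (sumR m n I).
Proof.
  intros HG; unfold sumR.
  assert (Hl : forall k, In k (seq m (S n - m)) -> is_RInt (G k) a b (I k))
    by (intros k Hk; apply in_seq in Hk; apply HG; lia).
  induction (seq m (S n - m)) as [|k l IH]; simpl in *.
  - assert (H0 : is_RInt (fun _ => 0) a b ((b - a) * 0))
      by exact (@is_RInt_const R_NormedModule a b 0).
    rewrite Rmult_0_r in H0; exact H0.
  - apply is_RInt_Rplus; auto.
Qed.

Lemma RInt_le_const (g : R -> R) a b c : a <= b -> (forall y, continuous g y) ->
  (forall t, a < t < b -> g t <= c) -> RInt g a b <= (b - a) * c.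
Proof.
  intros Hab Hg Hc.
  replace ((b - a) * c) with (RInt (fun _ => c) a b) by (rewrite RInt_const; reflexivity).
  apply RInt_le; auto; apply ex_RInt_R_continuous; [exact Hg | intros; apply continuous_const].
Qed.

Lemma RInt_comp_add_r (g : R -> R) c a b : (forall y, continuous g y) ->
  RInt (fun t => g (t + c)) a b = RInt g (a + c) (b + c).
Proof.
  intros Hg.
  replace (a + c) with (1 * a + c) by ring; replace (b + c) with (1 * b + c) by ring.
  rewrite <- (RInt_comp_lin g) by (apply ex_RInt_R_continuous, Hg).
  apply RInt_ext; intros t _; unfold scal; simpl; unfold mult; simpl.
  rewrite Rmult_1_l; f_equal; ring.
Qed.

Lemma RInt_comp_opp_R (g : R -> R) a b : (forall y, continuous g y) ->
  RInt (fun t => g (- t)) a b = RInt g (- b) (- a).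
Proof.
  intros Hg.
  assert (Hex : ex_RInt (fun t => g (- t)) a b).
  { apply ex_RInt_R_continuous; intros y.
    apply (continuous_comp_derivable (fun t => - t)); [auto_derive; auto | exact Hg]. }
  pose proof (RInt_comp_lin g (-1) 0 a b (ex_RInt_R_continuous g _ _ Hg)) as H.
  rewrite (RInt_ext _ (fun y => opp (g (- y)))) in H.
  2:{ intros t _; unfold scal, opp; simpl; unfold mult; simpl.
      replace (-1 * t + 0) with (- t) by ring; ring. }
  rewrite (RInt_opp (V := R_CompleteNormedModule)) in H by exact Hex.
  replace (-1 * a + 0) with (- a) in H by ring; replace (-1 * b + 0) with (- b) in H by ring.
  rewrite <- (opp_RInt_swap g) in H by (apply ex_RInt_R_continuous, Hg).
  unfold opp in H; simpl in H; lra.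
Qed.

Lemma RInt_sym_fold (g : R -> R) c : (forall y, continuous g y) ->
  RInt g (- c) c = RInt (fun t => g t + g (- t)) 0 c.
Proof.
  intros Hg.
  assert (Hopp : forall y, continuous (fun t => g (- t)) y)
    by (intros y; apply (continuous_comp_derivable (fun t => - t)); [auto_derive; auto | exact Hg]).
  rewrite (RInt_plus (V := R_CompleteNormedModule) g (fun t => g (- t)))
    by (apply ex_RInt_R_continuous; auto).
  rewrite RInt_comp_opp_R, Ropp_0 by exact Hg.
  rewrite <- (RInt_Chasles g (- c) 0 c) by (apply ex_RInt_R_continuous, Hg).
  unfold plus; simpl; ring.
Qed.

Lemma RInt_periodic_comp_add (g : R -> R) c :
  (forall y, continuous g y) -> (forall y, g (y + 2 * PI) = g y) ->
  RInt (fun t => g (c + t)) (- PI) PI = RInt g (- PI) PI.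
Proof.
  intros Hg Hper.
  assert (Hex : forall u v, ex_RInt g u v) by (intros; apply ex_RInt_R_continuous, Hg).
  assert (Hwrap : RInt g PI (PI + c) = RInt g (- PI) (- PI + c)).
  { rewrite <- (RInt_ext (fun t => g (t + 2 * PI)) g (- PI) (- PI + c)) by (intros; apply Hper).
    rewrite RInt_comp_add_r by exact Hg; f_equal; ring. }
  rewrite (RInt_ext _ (fun t => g (t + c))) by (intros; f_equal; ring).
  rewrite RInt_comp_add_r by exact Hg.
  rewrite <- (RInt_Chasles g (- PI + c) PI (PI + c)), Hwrap by auto.
  rewrite <- (RInt_Chasles g (- PI + c) (- PI) PI) by auto.
  rewrite <- (opp_RInt_swap g (- PI) (- PI + c)) by auto.
  unfold plus, opp; simpl; ring.
Qed.

Lemma RInt_split_harmonic (g : R -> R) N : (forall y, continuous g y) ->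
  RInt g 0 PI =
  RInt g 0 (PI / (INR N + 1)) + sumR 1 N (fun v => RInt g (PI / (INR v + 1)) (PI / INR v)).
Proof.
  intros Hg; induction N as [|N IH].
  - rewrite sumR_empty by lia; simpl; rewrite Rplus_0_r; f_equal; field.
  - rewrite sumR_Sr, IH by lia.
    replace (PI / INR (S N)) with (PI / (INR N + 1)) by (rewrite S_INR; reflexivity).
    rewrite <- (RInt_Chasles g 0 (PI / (INR (S N) + 1)) (PI / (INR N + 1)))
      by (apply ex_RInt_R_continuous, Hg).
    unfold plus; simpl; ring.
Qed.

(** * Periodic functions and the modulus of continuity *)

Lemma periodic_add_nat (g : R -> R) T : (forall x, g (x + T) = g x) ->
  forall N x, g (x + INR N * T) = g x.
Proof.
  intros Hper N; induction N as [|N IH]; intros x.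
  - change (INR 0) with 0; f_equal; ring.
  - rewrite S_INR; replace (x + (INR N + 1) * T) with (x + INR N * T + T) by ring.
    rewrite Hper; apply IH.
Qed.

Lemma periodic_continuous_bounded (g : R -> R) T : 0 < T ->
  (forall x, continuous g x) -> (forall x, g (x + T) = g x) ->
  exists M, forall y, Rabs (g y) <= M.
Proof.
  intros HT Hg Hper.
  destruct (continuity_ab_maj (fun t => Rabs (g t)) 0 T) as [ymax [Hmax _]].
  { lra. }
  { intros y _; apply continuity_pt_filterlim, continuous_Rabs_comp, Hg. }
  exists (Rabs (g ymax)); intros y.
  destruct (INR_archimed T (Rabs y)) as [N HN]; [lra|].
  set (y0 := y + INR N * T).
  assert (Hy0 : 0 <= y0) by (unfold y0; pose proof (Rle_abs (- y)); rewrite Rabs_Ropp in *; lra).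
  destruct (nfloor_ex (y0 / T)) as [q [Hq1 Hq2]].
  { apply Rmult_le_pos; [exact Hy0 | apply Rlt_le, Rinv_0_lt_compat, HT]. }
  rewrite <- (periodic_add_nat g _ Hper N y); fold y0.
  replace y0 with ((y0 - INR q * T) + INR q * T) by ring.
  rewrite (periodic_add_nat g _ Hper).
  apply Hmax.
  apply Rmult_le_compat_r with (r := T) in Hq1; [|lra].
  apply Rmult_lt_compat_r with (r := T) in Hq2; [|lra].
  unfold Rdiv in Hq1, Hq2; rewrite Rmult_assoc, Rinv_l, Rmult_1_r in Hq1, Hq2 by lra.
  lra.
Qed.

(* [modulus f d] is the [real] part of an extended-real supremum: it is [0], not an upper
   bound, when [f] is unbounded. *)
Lemma modulus_ge (f : R -> R) :
  (forall x, continuous f x) -> (forall x, f (x + 2 * PI) = f x) ->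
  forall d h x, Rabs h <= d -> Rabs (f (x + h) - f x) <= modulus f d.
Proof.
  intros Hf Hper d h x Hh.
  destruct (periodic_continuous_bounded f (2 * PI) ltac:(pose proof PI_RGT_0; lra) Hf Hper)
    as [M HM].
  set (E := fun y => exists h x, Rabs h <= d /\ y = Rabs (f (x + h) - f x)).
  assert (HE : E (Rabs (f (x + h) - f x))) by (exists h, x; auto).
  assert (Hub : is_ub_Rbar E (2 * M)).
  { intros y [h' [x' [_ ->]]]; simpl.
    eapply Rle_trans; [apply Rabs_triang|].
    rewrite Rabs_Ropp; pose proof (HM (x' + h')); pose proof (HM x'); lra. }
  destruct (Lub_Rbar_correct E) as [Hlub Hleast].
  unfold modulus; fold E.
  specialize (Hlub _ HE); specialize (Hleast _ Hub).
  destruct (Lub_Rbar E); simpl in *; auto; contradiction.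
Qed.

Lemma modulus_nonneg (f : R -> R) d :
  (forall x, continuous f x) -> (forall x, f (x + 2 * PI) = f x) -> 0 <= d -> 0 <= modulus f d.
Proof.
  intros Hf Hper Hd.
  eapply Rle_trans; [apply Rabs_pos | apply (modulus_ge f Hf Hper d 0 0)].
  rewrite Rabs_R0; exact Hd.
Qed.

Lemma continuous_symmetric_difference (f : R -> R) x y : (forall x, continuous f x) ->
  continuous (fun t => f (x + t) + f (x - t) - 2 * f x) y.
Proof.
  intros Hf; apply continuous_Rminus; [apply continuous_Rplus | apply continuous_const].
  - apply (continuous_comp_derivable (fun t => x + t)); [auto_derive; auto | exact Hf].
  - apply (continuous_comp_derivable (fun t => x - t)); [auto_derive; auto | exact Hf].
Qed.

Lemma Rabs_symmetric_difference_le (f : R -> R) x t d :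
  (forall x, continuous f x) -> (forall x, f (x + 2 * PI) = f x) -> 0 <= t <= d ->
  Rabs (f (x + t) + f (x - t) - 2 * f x) <= 2 * modulus f d.
Proof.
  intros Hf Hper Ht.
  replace (f (x + t) + f (x - t) - 2 * f x)
    with ((f (x + t) - f x) + (f (x + - t) - f x)) by (unfold Rminus; ring).
  eapply Rle_trans; [apply Rabs_triang|].
  pose proof (modulus_ge f Hf Hper d t x ltac:(rewrite Rabs_right; lra)).
  pose proof (modulus_ge f Hf Hper d (- t) x ltac:(rewrite Rabs_Ropp, Rabs_right; lra)).
  lra.
Qed.

(** * The kernel of T_nA *)

Definition dirichlet (k : nat) (t : R) : R := / 2 + sumR 1 k (fun j => cos (INR j * t)).

Definition kernel (r : nat -> R) (n : nat) (t : R) : R := sumR 0 n (fun k => r k * dirichlet k t).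

Lemma dirichlet_continuous k x : continuous (dirichlet k) x.
Proof.
  apply continuous_Rplus; [apply continuous_const|].
  apply (continuous_sumR (fun j t => cos (INR j * t))); intros; apply continuous_cos_mul.
Qed.

Lemma kernel_continuous r n x : continuous (kernel r n) x.
Proof.
  apply (continuous_sumR (fun k t => r k * dirichlet k t)); intros k.
  apply continuous_Rmult; [apply continuous_const | apply dirichlet_continuous].
Qed.

Lemma dirichlet_periodic k t : dirichlet k (t + 2 * PI) = dirichlet k t.
Proof.
  unfold dirichlet; f_equal; apply sumR_ext; intros j _.
  replace (INR j * (t + 2 * PI)) with (INR j * t + 2 * INR j * PI) by ring.
  apply cos_period.
Qed.

Lemma kernel_even r n t : kernel r n (- t) = kernel r n t.
Proof.
  apply sumR_ext; intros k _; unfold dirichlet; do 2 f_equal.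
  apply sumR_ext; intros j _; rewrite <- cos_neg; f_equal; ring.
Qed.

Lemma is_RInt_cos_mul j : (1 <= j)%nat -> is_RInt (fun t => cos (INR j * t)) (- PI) PI 0.
Proof.
  intros Hj.
  assert (Hj0 : INR j <> 0) by (apply not_0_INR; lia).
  set (F := fun t => sin (INR j * t) / INR j).
  replace 0 with (minus (F PI) (F (- PI))).
  - apply (@is_RInt_derive R_CompleteNormedModule).
    + intros t _; unfold F; auto_derive; auto; field; exact Hj0.
    + intros; apply continuous_cos_mul.
  - unfold minus, plus, opp, F; simpl.
    replace (INR j * - PI) with (- (INR j * PI)) by ring.
    assert (Hsin : sin (INR j * PI) = 0)
      by (apply sin_eq_0_1; exists (Z.of_nat j); rewrite INR_IZR_INZ; reflexivity).
    rewrite sin_neg, Hsin; field; exact Hj0.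
Qed.

Lemma is_RInt_dirichlet k : is_RInt (dirichlet k) (- PI) PI PI.
Proof.
  replace PI with ((PI - - PI) * / 2 + sumR 1 k (fun _ => 0)) at 3
    by (rewrite sumR_const; field).
  apply is_RInt_Rplus.
  - exact (@is_RInt_const R_NormedModule (- PI) PI (/ 2)).
  - apply (is_RInt_sumR (fun j t => cos (INR j * t))); intros j Hj.
    apply is_RInt_cos_mul; lia.
Qed.

Lemma is_RInt_fourier_a f j : (forall x, continuous f x) ->
  is_RInt (fun s => f s * cos (INR j * s)) (- PI) PI (PI * fourier_a f j).
Proof.
  intros Hf; unfold fourier_a.
  rewrite <- Rmult_assoc, Rinv_r, Rmult_1_l by apply PI_neq0.
  apply (@RInt_correct R_CompleteNormedModule), ex_RInt_R_continuous; intros.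
  apply continuous_Rmult; [apply Hf | apply continuous_cos_mul].
Qed.

Lemma is_RInt_fourier_b f j : (forall x, continuous f x) ->
  is_RInt (fun s => f s * sin (INR j * s)) (- PI) PI (PI * fourier_b f j).
Proof.
  intros Hf; unfold fourier_b.
  rewrite <- Rmult_assoc, Rinv_r, Rmult_1_l by apply PI_neq0.
  apply (@RInt_correct R_CompleteNormedModule), ex_RInt_R_continuous; intros.
  apply continuous_Rmult; [apply Hf | apply continuous_sin_mul].
Qed.

Lemma is_RInt_mul_dirichlet_sub f k x : (forall x, continuous f x) ->
  is_RInt (fun s => f s * dirichlet k (s - x)) (- PI) PI (PI * S_partial f k x).
Proof.
  intros Hf.
  set (term := fun j s => cos (INR j * x) * (f s * cos (INR j * s))
                          + sin (INR j * x) * (f s * sin (INR j * s))).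
  assert (H : is_RInt (fun s => / 2 * (f s * cos (0 * s)) + sumR 1 k (fun j => term j s))
      (- PI) PI (/ 2 * (PI * fourier_a f 0) + sumR 1 k (fun j =>
        cos (INR j * x) * (PI * fourier_a f j) + sin (INR j * x) * (PI * fourier_b f j)))).
  { apply is_RInt_Rplus; [apply is_RInt_Rscal, is_RInt_fourier_a, Hf|].
    apply (is_RInt_sumR term); intros j _.
    apply is_RInt_Rplus; apply is_RInt_Rscal;
      [apply is_RInt_fourier_a | apply is_RInt_fourier_b]; exact Hf. }
  replace (PI * S_partial f k x) with (/ 2 * (PI * fourier_a f 0) + sumR 1 k (fun j =>
      cos (INR j * x) * (PI * fourier_a f j) + sin (INR j * x) * (PI * fourier_b f j))).
  - eapply is_RInt_ext; [|exact H]; intros s _; unfold dirichlet, term.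
    rewrite Rmult_0_l, cos_0, Rmult_plus_distr_l, <- sumR_scal; f_equal; [ring|].
    apply sumR_ext; intros j _.
    replace (INR j * (s - x)) with (INR j * s - INR j * x) by ring.
    rewrite cos_minus; ring.
  - unfold S_partial; rewrite Rmult_plus_distr_l, <- sumR_scal; f_equal; [field|].
    apply sumR_ext; intros; ring.
Qed.

Lemma is_RInt_S_partial_sub f k x :
  (forall x, continuous f x) -> (forall x, f (x + 2 * PI) = f x) ->
  is_RInt (fun t => (f (x + t) - f x) * dirichlet k t) (- PI) PI (PI * (S_partial f k x - f x)).
Proof.
  intros Hf Hper.
  set (g := fun s => f s * dirichlet k (s - x)).
  assert (Hg : forall y, continuous g y).
  { intros y; apply continuous_Rmult; [apply Hf|].
    apply (continuous_comp_derivable (fun s => s - x));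
      [auto_derive; auto | apply dirichlet_continuous]. }
  assert (Hgper : forall y, g (y + 2 * PI) = g y).
  { intros y; unfold g; rewrite Hper.
    replace (y + 2 * PI - x) with (y - x + 2 * PI) by ring.
    rewrite dirichlet_periodic; reflexivity. }
  assert (Hshift : forall y, continuous (fun t => f (x + t)) y)
    by (intros y; apply (continuous_comp_derivable (fun t => x + t));
        [auto_derive; auto | exact Hf]).
  assert (H1 : is_RInt (fun t => f (x + t) * dirichlet k t) (- PI) PI (PI * S_partial f k x)).
  { rewrite <- (is_RInt_unique _ _ _ _ (is_RInt_mul_dirichlet_sub f k x Hf)).
    change (RInt (fun s => f s * dirichlet k (s - x)) (- PI) PI) with (RInt g (- PI) PI).
    rewrite <- (RInt_periodic_comp_add g x Hg Hgper).
    rewrite (RInt_ext (fun t => g (x + t)) (fun t => f (x + t) * dirichlet k t))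
      by (intros t _; unfold g; do 3 f_equal; ring).
    apply (@RInt_correct R_CompleteNormedModule), ex_RInt_R_continuous; intros y.
    apply continuous_Rmult; [apply Hshift | apply dirichlet_continuous]. }
  replace (PI * (S_partial f k x - f x)) with (PI * S_partial f k x - f x * PI) by ring.
  pose proof (is_RInt_Rscal _ _ _ (f x) _ (is_RInt_dirichlet k)) as H2.
  eapply is_RInt_ext; [|apply (is_RInt_Rminus _ _ _ _ _ _ H1 H2)].
  intros t _; simpl; ring.
Qed.

Lemma is_RInt_T_nA_sub f a n x :
  (forall x, continuous f x) -> (forall x, f (x + 2 * PI) = f x) -> sumR 0 n (a n) = 1 ->
  is_RInt (fun t => (f (x + t) - f x) * kernel (a n) n t) (- PI) PI (PI * (T_nA a f n x - f x)).
Proof.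
  intros Hf Hper Hsum.
  assert (H := is_RInt_sumR (fun k t => a n k * ((f (x + t) - f x) * dirichlet k t))
    (fun k => a n k * (PI * (S_partial f k x - f x))) (- PI) PI 0 n
    (fun k _ => is_RInt_Rscal _ _ _ _ _ (is_RInt_S_partial_sub f k x Hf Hper))).
  replace (PI * (T_nA a f n x - f x))
    with (sumR 0 n (fun k => a n k * (PI * (S_partial f k x - f x)))).
  - eapply is_RInt_ext; [|exact H]; intros t _; unfold kernel.
    rewrite <- sumR_scal; apply sumR_ext; intros; ring.
  - rewrite (sumR_ext _ _ _ (fun k => PI * (a n k * S_partial f k x) + (- PI * f x) * a n k))
      by (intros; ring).
    rewrite sumR_plus, !sumR_scal; unfold T_nA.
    change (sumR 0 n (fun k => a n k)) with (sumR 0 n (a n)); rewrite Hsum; ring.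
Qed.

Lemma T_nA_sub_eq_RInt f a n x :
  (forall x, continuous f x) -> (forall x, f (x + 2 * PI) = f x) -> sumR 0 n (a n) = 1 ->
  PI * (T_nA a f n x - f x) =
  RInt (fun t => (f (x + t) + f (x - t) - 2 * f x) * kernel (a n) n t) 0 PI.
Proof.
  intros Hf Hper Hsum.
  rewrite <- (is_RInt_unique _ _ _ _ (is_RInt_T_nA_sub f a n x Hf Hper Hsum)).
  rewrite RInt_sym_fold.
  - apply RInt_ext; intros t _; simpl; rewrite kernel_even; unfold Rminus; ring.
  - intros y; apply continuous_Rmult; [|apply kernel_continuous].
    apply continuous_Rminus; [|apply continuous_const].
    apply (continuous_comp_derivable (fun t => x + t)); [auto_derive; auto | exact Hf].
Qed.

Lemma Rabs_T_nA_sub_le f a n x :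
  (forall x, continuous f x) -> (forall x, f (x + 2 * PI) = f x) -> sumR 0 n (a n) = 1 ->
  PI * Rabs (T_nA a f n x - f x) <=
  RInt (fun t => Rabs ((f (x + t) + f (x - t) - 2 * f x) * kernel (a n) n t)) 0 PI.
Proof.
  intros Hf Hper Hsum.
  rewrite <- (Rabs_right PI) at 1 by (apply Rle_ge, Rlt_le, PI_RGT_0).
  rewrite <- Rabs_mult, T_nA_sub_eq_RInt by assumption.
  apply abs_RInt_le; [apply Rlt_le, PI_RGT_0|].
  apply ex_RInt_R_continuous; intros y.
  apply continuous_Rmult; [apply continuous_symmetric_difference, Hf | apply kernel_continuous].
Qed.

(** * Estimates of the kernel *)

Lemma sin_ge_third y : 0 <= y <= 2 -> y / 3 <= sin y.
Proof.
  intros Hy; assert (HPI := PI2_3_2).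
  destruct (sin_bound y 0) as [Hlow _]; try lra.
  unfold sin_approx, sin_term in Hlow; simpl in Hlow; nra.
Qed.

Lemma Rabs_dirichlet_le k t : Rabs (dirichlet k t) <= / 2 + INR k.
Proof.
  unfold dirichlet; eapply Rle_trans; [apply Rabs_triang|].
  rewrite Rabs_right by lra; apply Rplus_le_compat_l.
  eapply Rle_trans; [apply Rabs_sumR_le|].
  eapply Rle_trans; [apply (sumR_le _ _ _ (fun _ => 1)); intros; apply Rabs_le, COS_bound|].
  rewrite sumR_const, Nat.sub_1_r; simpl; lra.
Qed.

Lemma sin_half_mul_dirichlet k t : 2 * sin (t / 2) * dirichlet k t = sin ((INR k + / 2) * t).
Proof.
  induction k as [|k IH]; unfold dirichlet in *.
  - rewrite sumR_empty by lia.
    replace ((INR 0 + / 2) * t) with (t / 2) by (simpl; field); field.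
  - rewrite sumR_Sr by lia; set (s := sumR 1 k _) in *.
    transitivity (2 * sin (t / 2) * (/ 2 + s) + 2 * sin (t / 2) * cos (INR (S k) * t)); [ring|].
    rewrite IH, S_INR.
    replace ((INR k + / 2) * t) with ((INR k + 1) * t - t / 2) by field.
    replace ((INR k + 1 + / 2) * t) with ((INR k + 1) * t + t / 2) by field.
    rewrite sin_plus, sin_minus; ring.
Qed.

Lemma sin_half_mul_sin k t :
  2 * sin (t / 2) * sin ((INR k + / 2) * t) = cos (INR k * t) - cos (INR (S k) * t).
Proof.
  rewrite S_INR.
  replace (INR k * t) with ((INR k + / 2) * t - t / 2) by field.
  replace ((INR k + 1) * t) with ((INR k + / 2) * t + t / 2) by field.
  rewrite cos_plus, cos_minus; ring.
Qed.

Lemma sin_half_mul_kernel r n t :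
  2 * sin (t / 2) * kernel r n t = sumR 0 n (fun k => r k * sin ((INR k + / 2) * t)).
Proof.
  unfold kernel; rewrite <- sumR_scal; apply sumR_ext; intros k _.
  rewrite <- sin_half_mul_dirichlet; ring.
Qed.

(* [sin (t/2) >= t/6 > pi / (6 (v + 1)) > 1 / (2 (v + 1))] since [pi > 3] *)
Lemma sin_half_pos_inv_le v t : PI / (INR v + 1) < t -> t <= PI ->
  0 < sin (t / 2) /\ / sin (t / 2) <= 2 * (INR v + 1).
Proof.
  intros Ht1 Ht2.
  assert (HPI := PI2_3_2); assert (HPI4 := PI_4).
  assert (Hv1 : 0 < INR v + 1) by (pose proof (pos_INR v); lra).
  assert (Htv : PI < t * (INR v + 1)).
  { apply (Rmult_lt_compat_r (INR v + 1)) in Ht1; [|exact Hv1].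
    unfold Rdiv in Ht1; rewrite Rmult_assoc, Rinv_l, Rmult_1_r in Ht1 by lra; exact Ht1. }
  assert (Ht0 : 0 < t) by nra.
  assert (Hs : t / 2 / 3 <= sin (t / 2)) by (apply sin_ge_third; lra).
  split; [lra|].
  apply Rmult_le_reg_l with (sin (t / 2)); [lra|].
  rewrite Rinv_r by lra; nra.
Qed.

Lemma Rabs_sumR_weighted_sin_le (w : nat -> R) t m q :
  0 < sin (t / 2) -> (forall k, 0 <= w k) -> (forall k, w k <= w (S k)) -> (m <= q)%nat ->
  Rabs (sumR m q (fun j => w j * sin ((INR j + / 2) * t))) <= w q / sin (t / 2).
Proof.
  intros Hs Hw Hmono Hmq.
  rewrite (sumR_ext _ _ _
    (fun j => / (2 * sin (t / 2)) * (w j * (cos (INR j * t) - cos (INR (S j) * t)))))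
    by (intros j _; rewrite <- sin_half_mul_sin; field; lra).
  rewrite sumR_scal, Rabs_mult, Rabs_right by (apply Rle_ge, Rlt_le, Rinv_0_lt_compat; lra).
  apply Rle_trans with (/ (2 * sin (t / 2)) * (2 * w q)); [|right; field; lra].
  apply Rmult_le_compat_l; [apply Rlt_le, Rinv_0_lt_compat; lra|].
  apply Rabs_sumR_weighted_diff_le; auto.
  intros; apply Rabs_le, COS_bound.
Qed.

Definition weighted_variation (r : nat -> R) (beta : R) (m : nat) : R :=
  Series (fun i => Rpower (INR (m + i) + 1) beta *
    Rabs (r (m + i)%nat / Rpower (INR (m + i) + 1) beta
          - r (S (m + i)) / Rpower (INR (m + i) + 2) beta)).

Section Kernel_estimates.

Variables (r : nat -> R) (n : nat) (beta K : R).
Hypothesis beta_nonneg : 0 <= beta.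
Hypothesis K_nonneg : 0 <= K.
Hypothesis r_lower : forall k, (n < k)%nat -> r k = 0.
Hypothesis r_nonneg : forall k, 0 <= r k.
Hypothesis r_sum : sumR 0 n r = 1.
Hypothesis r_variation : forall m, (m <= n)%nat -> weighted_variation r beta m <= K * r m.

Let w k := Rpower (INR k + 1) beta.

Lemma weighted_variation_sumR m : (m <= n)%nat ->
  weighted_variation r beta m = sumR m n (fun k => w k * Rabs (r k / w k - r (S k) / w (S k))).
Proof.
  intros Hmn; unfold weighted_variation.
  rewrite (Series_eq_sumR _ (n - m)).
  - transitivity (sumR m (m + (n - m)) (fun k => w k * Rabs (r k / w k - r (S k) / w (S k)))).
    + rewrite <- sumR_shift; apply sumR_ext; intros i _; unfold w.
      rewrite S_INR; replace (INR (m + i) + 1 + 1) with (INR (m + i) + 2) by ring; reflexivity.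
    + f_equal; lia.
  - intros i Hi; rewrite !r_lower by lia.
    unfold Rdiv; rewrite !Rmult_0_l, Rminus_0_r, Rabs_R0; ring.
Qed.

Lemma Rabs_kernel_le t : Rabs (kernel r n t) <= INR n + 1.
Proof.
  unfold kernel; eapply Rle_trans; [apply Rabs_sumR_le|].
  apply Rle_trans with (sumR 0 n (fun k => (INR n + 1) * r k)).
  - apply sumR_le; intros k Hk.
    rewrite Rabs_mult, Rabs_right by (apply Rle_ge, r_nonneg).
    assert (INR k <= INR n) by (apply le_INR; lia).
    pose proof (Rabs_dirichlet_le k t); pose proof (r_nonneg k); nra.
  - rewrite sumR_scal; change (sumR 0 n (fun k => r k)) with (sumR 0 n r); rewrite r_sum; lra.
Qed.

Lemma Rabs_sumR_sin_tail_le t m : 0 < sin (t / 2) -> (m <= n)%nat ->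
  Rabs (sumR m n (fun k => r k * sin ((INR k + / 2) * t))) <= K * r m / sin (t / 2).
Proof.
  intros Hs Hmn.
  assert (w_pos : forall k, 0 < w k) by (intros; apply exp_pos).
  assert (w_mono : forall k, w k <= w (S k)).
  { intros k; apply Rle_Rpower_l; [exact beta_nonneg|].
    rewrite S_INR; pose proof (pos_INR k); lra. }
  set (b := fun k => r k / w k).
  rewrite (sumR_ext _ _ _ (fun k => b k * (w k * sin ((INR k + / 2) * t))))
    by (intros k _; unfold b; field; apply Rgt_not_eq, w_pos).
  rewrite sumR_by_parts by exact Hmn.
  replace (b (S n)) with 0 by (unfold b; rewrite r_lower by lia; unfold Rdiv; ring).
  rewrite Rmult_0_l, Rplus_0_r.
  eapply Rle_trans; [apply Rabs_sumR_le|].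
  apply Rle_trans with (/ sin (t / 2) * weighted_variation r beta m).
  2:{ apply Rle_trans with (/ sin (t / 2) * (K * r m)); [|right; field; lra].
      apply Rmult_le_compat_l; [apply Rlt_le, Rinv_0_lt_compat, Hs | apply r_variation, Hmn]. }
  rewrite weighted_variation_sumR, <- sumR_scal by exact Hmn.
  apply sumR_le; intros k Hk; rewrite Rabs_mult.
  pose proof (Rabs_sumR_weighted_sin_le w t m k Hs (fun k => Rlt_le _ _ (w_pos k)) w_mono
    ltac:(lia)) as HC.
  pose proof (Rabs_pos (b k - b (S k))).
  apply Rle_trans with (Rabs (b k - b (S k)) * (w k / sin (t / 2)));
    [apply Rmult_le_compat_l; auto | right; unfold b; field; lra].
Qed.

Lemma Rabs_sumR_sin_le_split t v m : 0 < sin (t / 2) -> (m <= v)%nat -> (v <= n)%nat ->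
  Rabs (sumR 0 n (fun k => r k * sin ((INR k + / 2) * t))) <= sumR 0 v r + K * r m / sin (t / 2).
Proof.
  intros Hs Hmv Hvn.
  destruct m as [|p].
  - pose proof (Rabs_sumR_sin_tail_le t 0 Hs ltac:(lia)).
    pose proof (sumR_nonneg 0 v r (fun k _ => r_nonneg k)); lra.
  - rewrite (sumR_split 0 p n) by lia.
    eapply Rle_trans; [apply Rabs_triang|]; apply Rplus_le_compat.
    + eapply Rle_trans; [apply Rabs_sumR_le|].
      apply Rle_trans with (sumR 0 p r); [|apply sumR_le_upper; [exact r_nonneg | lia]].
      apply sumR_le; intros k _.
      rewrite Rabs_mult, Rabs_right by (apply Rle_ge, r_nonneg).
      rewrite <- (Rmult_1_r (r k)) at 2.
      apply Rmult_le_compat_l; [apply r_nonneg | apply Rabs_le, SIN_bound].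
    + apply Rabs_sumR_sin_tail_le; [exact Hs | lia].
Qed.

Lemma Rabs_sumR_sin_le_mean t v :
  0 < sin (t / 2) -> / sin (t / 2) <= 2 * (INR v + 1) -> (v <= n)%nat ->
  Rabs (sumR 0 n (fun k => r k * sin ((INR k + / 2) * t))) <= (1 + 2 * K) * sumR 0 v r.
Proof.
  intros Hs0 Hsv Hvn.
  assert (Hv1 : 0 < INR v + 1) by (pose proof (pos_INR v); lra).
  set (X := sumR 0 n _); set (A := sumR 0 v r).
  assert (HA : 0 <= A) by (apply sumR_nonneg; intros; apply r_nonneg).
  (* averaging the split bound over the splitting point [m = 0 .. v] turns [r m] into [A] *)
  assert (Havg : INR (S v) * Rabs X <= INR (S v) * A + K * / sin (t / 2) * A).
  { assert (Hsplit : forall m, (0 <= m <= v)%nat -> Rabs X <= A + K * / sin (t / 2) * r m).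
    { intros m Hm; replace (K * / sin (t / 2) * r m) with (K * r m / sin (t / 2)) by (field; lra).
      apply Rabs_sumR_sin_le_split; [exact Hs0 | apply Hm | exact Hvn]. }
    pose proof (sumR_le 0 v (fun _ => Rabs X) (fun m => A + K * / sin (t / 2) * r m) Hsplit) as H.
    rewrite sumR_const, sumR_plus, sumR_const, sumR_scal, Nat.sub_0_r in H; exact H. }
  rewrite S_INR in Havg.
  assert (HKA : 0 <= K * A) by (apply Rmult_le_pos; assumption).
  apply Rmult_le_reg_l with (INR v + 1); [exact Hv1 | nra].
Qed.

Lemma Rabs_kernel_le_block t v : (v <= n)%nat -> PI / (INR v + 1) < t -> t <= PI ->
  Rabs (kernel r n t) <= (1 + 2 * K) * (INR v + 1) * sumR 0 v r.
Proof.
  intros Hvn Ht1 Ht2.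
  destruct (sin_half_pos_inv_le v t Ht1 Ht2) as [Hs0 Hsv].
  pose proof (Rabs_sumR_sin_le_mean t v Hs0 Hsv Hvn) as HX.
  set (X := sumR 0 n _) in HX.
  assert (Hk : Rabs (kernel r n t) = / 2 * / sin (t / 2) * Rabs X).
  { unfold X; rewrite <- sin_half_mul_kernel, !Rabs_mult, (Rabs_right 2), (Rabs_right (sin (t / 2)))
      by lra.
    field; lra. }
  rewrite Hk.
  pose proof (Rabs_pos X); pose proof (pos_INR v); nra.
Qed.

Lemma RInt_abs_mul_kernel_le (phi omega : R -> R) :
  (forall y, continuous phi y) -> (forall t d, 0 <= t <= d -> Rabs (phi t) <= omega d) ->
  RInt (fun t => Rabs (phi t * kernel r n t)) 0 PI <=
  PI * omega (PI / (INR n + 1)) +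
  PI * (1 + 2 * K) * sumR 1 n (fun v => / INR v * omega (PI / INR v) * sumR 0 v r).
Proof.
  intros Hphi Hbound.
  assert (HPI := PI_RGT_0).
  set (g := fun t => Rabs (phi t * kernel r n t)).
  assert (Hg : forall y, continuous g y)
    by (intros; apply continuous_Rabs_comp, continuous_Rmult;
        [apply Hphi | apply kernel_continuous]).
  rewrite (RInt_split_harmonic g n Hg).
  assert (Hn1 : 0 < INR n + 1) by (pose proof (pos_INR n); lra).
  apply Rplus_le_compat.
  - eapply Rle_trans;
      [apply (RInt_le_const g _ _ (omega (PI / (INR n + 1)) * (INR n + 1))) | right; field; lra].
    + apply Rlt_le, Rdiv_lt_0_compat; lra.
    + exact Hg.
    + intros t Ht; unfold g; rewrite Rabs_mult.
      apply Rmult_le_compat; try apply Rabs_pos; [apply Hbound; lra | apply Rabs_kernel_le].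
  - rewrite <- sumR_scal; apply sumR_le; intros v Hv.
    assert (Hv0 : 0 < INR v) by (apply lt_0_INR; lia).
    assert (Hvn : INR v <= INR n) by (apply le_INR; lia).
    assert (Hv1 : 1 <= INR v) by (apply (le_INR 1); lia).
    assert (Hlo : 0 < PI / (INR v + 1)) by (apply Rdiv_lt_0_compat; lra).
    assert (Hhi : PI / INR v <= PI).
    { unfold Rdiv; rewrite <- (Rmult_1_r PI) at 2; apply Rmult_le_compat_l; [lra|].
      rewrite <- Rinv_1; apply Rinv_le_contravar; lra. }
    assert (Hord : PI / (INR v + 1) <= PI / INR v).
    { apply Rmult_le_compat_l; [lra | apply Rinv_le_contravar; lra]. }
    eapply Rle_trans; [apply (RInt_le_const g _ _
      (omega (PI / INR v) * ((1 + 2 * K) * (INR v + 1) * sumR 0 v r))) | right; field; lra].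
    + exact Hord.
    + exact Hg.
    + intros t Ht; unfold g; rewrite Rabs_mult.
      apply Rmult_le_compat; try apply Rabs_pos; [apply Hbound; lra|].
      apply Rabs_kernel_le_block; lra || lia.
Qed.

End Kernel_estimates.

Theorem theorem3p3 (f : R -> R) (a : nat -> nat -> R) (beta : R)
  (f_cont : forall x, continuous f x)
  (f_per : forall x, f (x + 2 * PI) = f x)
  (a_lower : forall n k, (n < k)%nat -> a n k = 0)
  (a_nonneg : forall n k, 0 <= a n k)
  (a_sum : forall n, sumR 0 n (a n) = 1)
  (beta_nonneg : 0 <= beta)
  (hyp : exists K, 0 < K /\ forall n m, (m <= n)%nat ->
     Series (fun i => Rpower (INR (m + i) + 1) beta *
        Rabs (a n (m + i)%nat / Rpower (INR (m + i) + 1) beta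
              - a n (S (m + i)) / Rpower (INR (m + i) + 2) beta))
     <= K * a n m) :
  exists C, 0 < C /\ forall (n : nat) (x : R),
    Rabs (T_nA a f n x - f x) <=
    C * (modulus f (PI / (INR n + 1)) +
         sumR 1 n (fun v => / INR v * modulus f (PI / INR v) * sumR 0 v (a n))).
Proof.
  destruct hyp as [K [K_pos a_variation]].
  exists (2 * (1 + 2 * K)); split; [lra|]; intros n x.
  assert (HPI := PI_RGT_0).
  pose proof (Rabs_T_nA_sub_le f a n x f_cont f_per (a_sum n)) as Hrep.
  pose proof (RInt_abs_mul_kernel_le (a n) n beta K beta_nonneg (Rlt_le _ _ K_pos)
    (a_lower n) (a_nonneg n) (a_sum n) (a_variation n)
    (fun t => f (x + t) + f (x - t) - 2 * f x) (fun d => 2 * modulus f d)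
    (fun y => continuous_symmetric_difference f x y f_cont)
    (fun t d => Rabs_symmetric_difference_le f x t d f_cont f_per)) as Hint; cbv beta in Hint.
  set (omega_n := modulus f (PI / (INR n + 1))) in *.
  set (omega_sum := sumR 1 n (fun v => / INR v * modulus f (PI / INR v) * sumR 0 v (a n))).
  rewrite (sumR_ext _ _ _ (fun v => 2 * (/ INR v * modulus f (PI / INR v) * sumR 0 v (a n))))
    in Hint by (intros; ring).
  rewrite sumR_scal in Hint; fold omega_sum in Hint.
  assert (Homega : 0 <= PI * K * omega_n).
  { apply Rmult_le_pos; [apply Rmult_le_pos; lra|].
    apply modulus_nonneg; auto.
    apply Rlt_le, Rdiv_lt_0_compat; [lra | pose proof (pos_INR n); lra]. }
  apply Rmult_le_reg_l with PI; [exact HPI|].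
  replace (PI * (2 * (1 + 2 * K) * (omega_n + omega_sum))) with
    (PI * (2 * omega_n) + PI * (1 + 2 * K) * (2 * omega_sum) + 4 * (PI * K * omega_n)) by ring.
  lra.
Qed.
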